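(* Let $H$ be a real Hilbert space with inner product $(\cdot,\cdot)_H$ and norm $\|\cdot\|_H$. Let $\mathcal{L}$ be a symmetric positive definite linear operator on $H$ and $f:H\to\mathbb{R}$ Fréchet differentiable with $\nabla f$ Lipschitz continuous with constant $L$. For each $\Phi\in H$ let $\mathbf{L}(\Phi)=\mathbf{M}(\Phi)+\mathbf{S}(\Phi)$ with $\mathbf{S}(\Phi)$ skew-symmetric and $-\mathbf{M}(\Phi)$ symmetric positive definite, and assume there are constants $\alpha_{\mathbf{M}},\beta_{\mathbf{S}}>0$ such that for all $\Phi,\Psi_1,\Psi_2,\Psi\in H$: $(\mathbf{S}(\Phi)\Psi_1,\Psi_2)_H\le\beta_{\mathbf{S}}\|\Psi_1\|_H\|\Psi_2\|_H$ and $(-\mathbf{M}(\Phi)\Psi,\Psi)_H\ge\alpha_{\mathbf{M}}\|\Psi\|_H^2$. Let $\tau>0$, $A>0$, let $\Phi^{n-1},\Phi^n\in H$ and $\hat\Phi^{n+\frac12}\in H$ be given, and suppose $\Phi^{n+1}$ satisfies the SGE-SCN scheme $$\frac{\Phi^{n+1}-\Phi^n}{\tau}=\mathbf{L}(\hat\Phi^{n+\frac12})\mu^{n+\frac12},\qquad \mu^{n+\frac12}=\mathcal{L}\Phi^{n+\frac12}-\tau A\,\mathbf{M}(\hat\Phi^{n+\frac12})(\Phi^{n+1}-\Phi^n)+\tfrac32\nabla f(\Phi^n)-\tfrac12\nabla f(\Phi^{n-1}),$$ with $\Phi^{n+\frac12}=\frac12(\Phi^{n+1}+\Phi^n)$.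 Define $$\tilde E_{CN}(\Phi^{k+1},\Phi^k)=\tfrac12\|\mathcal{L}^{1/2}\Phi^{k+1}\|_H^2+f(\Phi^{k+1})+\tfrac L4\|\Phi^{k+1}-\Phi^k\|_H^2 .$$ Then, provided $A\ge\frac{L^2}{4}\big(1+\frac{\beta_{\mathbf{S}}}{\alpha_{\mathbf{M}}}\big)^2$ (so that the right-hand side below is nonpositive), $$\tilde E_{CN}(\Phi^{n+1},\Phi^n)-\tilde E_{CN}(\Phi^n,\Phi^{n-1})\le-\Big(2\big(1+\tfrac{\beta_{\mathbf{S}}}{\alpha_{\mathbf{M}}}\big)^{-1}\sqrt A-L\Big)\|\Phi^{n+1}-\Phi^n\|_H^2 .$$
   Context: $\|\mathcal{L}^{1/2}\Phi\|_H^2=(\Phi,\mathcal{L}\Phi)_H$. Skew-symmetric: $(\mathbf{S}\Phi,\Psi)_H=-(\Phi,\mathbf{S}\Psi)_H$. *)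

From HB Require Import structures.
From mathcomp Require Import all_boot all_order all_algebra.
From mathcomp Require Import all_classical all_reals all_analysis.
Set Implicit Arguments. Unset Strict Implicit. Unset Printing Implicit Defensive.
Import Order.TTheory GRing.Theory Num.Theory.
Import numFieldNormedType.Exports.
Local Open Scope ring_scope.

(* A real inner product on a (complete) normed space V whose norm is the
   norm induced by the inner product: together with completeness of V this
   makes (V, ip) a real Hilbert space. *)
Definition is_hilbert_inner (R : realType) (V : normedModType R)
    (ip : V -> V -> R) : Prop :=
  [/\ (forall x y, ip x y = ip y x),
      (forall a x y z, ip (a *: x + y) z = a * ip x z + ip y z),
      (forall x, 0 <= ip x x),
      (forall x, ip x x = 0 -> x = 0) &
      (forall x, `|x| = Num.sqrt (ip x x))].

Definition op_symmetric (R : realType) (V : normedModType R)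
    (ip : V -> V -> R) (T : V -> V) : Prop :=
  forall x y, ip (T x) y = ip x (T y).

Definition op_skew (R : realType) (V : normedModType R)
    (ip : V -> V -> R) (T : V -> V) : Prop :=
  forall x y, ip (T x) y = - ip x (T y).

Definition op_posdef (R : realType) (V : normedModType R)
    (ip : V -> V -> R) (T : V -> V) : Prop :=
  forall x, x != 0 -> 0 < ip (T x) x.

Definition has_gradient (R : realType) (V : normedModType R)
    (ip : V -> V -> R) (f : V -> R) (g : V -> V) : Prop :=
  forall x, differentiable f x /\ (forall h, 'd f x h = ip (g x) h).

(* ||L^{1/2} Phi||^2 = (Phi, L Phi); modified Crank-Nicolson energy *)
Definition E_CN (R : realType) (V : normedModType R) (ip : V -> V -> R)
    (Lc : V -> V) (f : V -> R) (L : R) (Phi1 Phi0 : V) : R :=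
  2^-1 * ip Phi1 (Lc Phi1) + f Phi1 + L / 4 * `|Phi1 - Phi0| ^+ 2.

From HB Require Import structures.
From mathcomp Require Import all_boot all_order all_algebra.
From mathcomp Require Import all_classical all_reals all_analysis.
From mathcomp Require Import ring lra.
Import Order.TTheory GRing.Theory Num.Theory.
Import numFieldNormedType.Exports.
Set Implicit Arguments.
Unset Strict Implicit.
Unset Printing Implicit Defensive.
Local Open Scope ring_scope.

(* Testing the scheme against mu kills the skew part, so the increment
   d = Phi^{n+1} - Phi^n satisfies (d, mu) = - tau X with X = (-M mu, mu).
   Expanding mu, the symmetry of Lc turns (d, Lc Phi^{n+1/2}) into the
   difference of the quadratic energies, the descent lemma bounds the
   difference of f, and Young's inequality absorbs the extrapolated gradient
   term into the L/4 term: the energy difference is at most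
   - tau (X + A Y) + L |d|^2 with Y = (-M d, d).  On the other hand
   |d|^2 = tau (M mu + S mu, d) <= tau (1 + betaS/alphaM) sqrt (X Y) by
   Cauchy-Schwarz for the form of -M and the bounds on S and -M, while
   X + A Y >= 2 sqrt A sqrt (X Y). *)

Lemma quadratic_ge0_discr (R : realFieldType) (a b c : R) : 0 <= c ->
  (forall t, 0 <= a + 2 * t * b + t ^+ 2 * c) -> b ^+ 2 <= a * c.
Proof.
move=> c_ge0 q_ge0; have [c_gt0|] := boolP (0 < c).
  have := q_ge0 (- b / c).
  have -> : a + 2 * (- b / c) * b + (- b / c) ^+ 2 * c = (a * c - b ^+ 2) / c.
    by field; rewrite gt_eqF.
  by rewrite pmulr_lge0 ?invr_gt0 // subr_ge0.
rewrite lt_def c_ge0 andbT negbK => /eqP c0; subst c.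
have [->|b_neq0] := eqVneq b 0; first by rewrite expr0n mulr0.
have := q_ge0 (- (a + 1) / (2 * b)).
have -> : a + 2 * (- (a + 1) / (2 * b)) * b + (- (a + 1) / (2 * b)) ^+ 2 * 0 = -1.
  by field.
by rewrite ler0N1.
Qed.

Section SymmetricForm.
Variables (R : realFieldType) (V : lmodType R) (b : V -> V -> R).
Hypothesis formC : forall x y, b x y = b y x.
Hypothesis formL : forall a x y z, b (a *: x + y) z = a * b x z + b y z.

Lemma formDl x y z : b (x + y) z = b x z + b y z.
Proof. by have := formL 1 x y z; rewrite scale1r mul1r. Qed.

Lemma form0l z : b 0 z = 0.
Proof. by apply: (addrI (b 0 z)); rewrite -formDl !addr0. Qed.

Lemma formZl a x z : b (a *: x) z = a * b x z.
Proof. by rewrite -[a *: x]addr0 formL form0l addr0. Qed.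

Lemma formNl x z : b (- x) z = - b x z.
Proof. by rewrite -scaleN1r formZl mulN1r. Qed.

Lemma formBl x y z : b (x - y) z = b x z - b y z.
Proof. by rewrite formDl formNl. Qed.

Lemma formDr x y z : b z (x + y) = b z x + b z y.
Proof. by rewrite formC formDl !(formC _ z). Qed.

Lemma formZr a x z : b z (a *: x) = a * b z x.
Proof. by rewrite formC formZl formC. Qed.

Lemma formNr x z : b z (- x) = - b z x.
Proof. by rewrite formC formNl formC. Qed.

Lemma formBr x y z : b z (x - y) = b z x - b z y.
Proof. by rewrite formDr formNr. Qed.

Hypothesis form_ge0 : forall x, 0 <= b x x.

Lemma form_CauchySchwarz x y : b x y ^+ 2 <= b x x * b y y.
Proof.
apply: quadratic_ge0_discr => [|t]; first exact: form_ge0.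
have := form_ge0 (x + t *: y).
by rewrite formDl !formDr !formZl !formZr (formC y x); congr (_ <= _); ring.
Qed.

End SymmetricForm.

Lemma sqrtr_AGM2 (R : rcfType) (a b : R) : 0 <= a -> 0 <= b ->
  2 * Num.sqrt (a * b) <= a + b.
Proof.
move=> a_ge0 b_ge0; rewrite sqrtrM //.
have := sqr_ge0 (Num.sqrt a - Num.sqrt b).
by rewrite sqrrB !sqr_sqrtr // -mulr_natl; lra.
Qed.

Lemma is_derive_line (R : realType) (V : normedModType R) (f : V -> R) (d x : V) (t : R) :
  differentiable f (t *: d + x) ->
  is_derive t 1 (fun h : R => f (h *: d + x)) ('d f (t *: d + x) d).
Proof.
move=> df.
have dline : is_diff t (fun h : R => h *: d + x) (( *:%R^~ d) + cst 0 : R -> V).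
  exact: is_diffD.
have dcomp := @is_diff_comp R _ _ _ _ _ _ _ t dline (DiffDef _ df erefl).
apply: DeriveDef; first exact/diff_derivable/differentiable_comp.
rewrite deriveE; last exact: differentiable_comp.
by rewrite (@diff_val _ _ _ _ _ _ _ dcomp) /= !fctE /cst addr0 scale1r.
Qed.

(* L need not be nonnegative: when it is negative the hypotheses force a = b = 0. *)
Lemma mul_le_half_sum_sqr (R : realFieldType) (L a b : R) :
  0 <= a -> 0 <= b -> 0 <= L * a -> 0 <= L * b ->
  a * (L * b) <= L / 2 * (a ^+ 2 + b ^+ 2).
Proof.
move=> a_ge0 b_ge0 La_ge0 Lb_ge0; have [L_ge0|L_lt0] := lerP 0 L.
  by have := sqr_ge0 (a - b); nra.
have [a0 b0] : a = 0 /\ b = 0 by split; apply/eqP; rewrite eq_le; apply/andP; split; nra.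
by rewrite a0 b0 expr0n /= !(mul0r, mulr0, addr0).
Qed.

Section InnerProduct.
Variables (R : realType) (V : normedModType R) (ip : V -> V -> R).
Hypothesis ip_hilbert : is_hilbert_inner ip.

Let ipC : forall x y, ip x y = ip y x. Proof. by case: ip_hilbert. Qed.
Let ipL : forall a x y z, ip (a *: x + y) z = a * ip x z + ip y z.
Proof. by case: ip_hilbert. Qed.
Let ipE := (formDl ipL, formBl ipL, formZl ipL, formNl ipL,
            formDr ipC ipL, formBr ipC ipL, formZr ipC ipL, formNr ipC ipL).

Lemma ip_ge0 x : 0 <= ip x x.
Proof. by case: ip_hilbert. Qed.

Lemma ip_normE x : `|x| ^+ 2 = ip x x.
Proof. by case: ip_hilbert => _ _ _ _ ->; rewrite sqr_sqrtr ?ip_ge0. Qed.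

Lemma ip_le_norm x y : ip x y <= `|x| * `|y|.
Proof.
apply: le_trans (ler_norm _) _.
rewrite -ler_sqr ?nnegrE ?mulr_ge0 // real_normK ?num_real // exprMn !ip_normE.
exact: (form_CauchySchwarz ipC ipL ip_ge0).
Qed.

Lemma skew_ip_diag (T : V -> V) x : op_skew ip T -> ip (T x) x = 0.
Proof.
move=> /(_ x x); rewrite [ip x _]ipC => /eqP.
by rewrite -addr_eq0 -mulr2n mulrn_eq0 => /eqP.
Qed.

Lemma symmetric_ip_midpoint (T : {linear V -> V}) x y : op_symmetric ip T ->
  ip (x - y) (T (2^-1 *: (x + y))) = 2^-1 * (ip x (T x) - ip y (T y)).
Proof.
move=> T_sym; rewrite linearZ linearD !ipE.
by rewrite -[ip x (T y)]T_sym [ip (T x) y]ipC; ring.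
Qed.

Lemma lipschitz_gradient_descent (f : V -> R) (g : V -> V) (L : R) x y :
  has_gradient ip f g -> (forall x y, `|g x - g y| <= L * `|x - y|) ->
  f y - f x <= ip (g x) (y - x) + L / 2 * `|y - x| ^+ 2.
Proof.
move=> f_grad g_lip; set d := y - x; set C := ip (g x) d; set D := L / 2 * `|d| ^+ 2.
(* The mean value theorem for f along [x, y] minus its quadratic model. *)
pose P : {poly R} := C *: 'X + D *: 'X^2.
pose k : R -> R := (fun t => f (t *: d + x)) - horner P.
have k_derive (t : R) : is_derive t 1 k (ip (g (t *: d + x)) d - P^`().[t]).
  apply: is_deriveB; have [f_diff <-] := f_grad (t *: d + x).
  exact: is_derive_line.
have k_cont : {within `[0, 1], continuous k}%classic.
  by apply: derivable_within_continuous => t _; case: (k_derive t).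
have [c c01 k_mvt] := MVT ltr01 (fun t _ => k_derive t) k_cont.
move: c01 k_mvt; rewrite in_itv /= => /andP[c_gt0 _].
have -> : k 1 = f y - (C + D).
  by rewrite /k /= !fctE scale1r subrK /P !hornerE /= !mulr1.
have -> : k 0 = f x.
  by rewrite /k /= !fctE scale0r add0r /P !hornerE /= !mulr0 subr0.
have -> : P^`().[c] = C + 2 * D * c.
  by rewrite /P derivD !derivZ derivX derivXn !hornerE /= /D; lra.
have : ip (g (c *: d + x)) d - C <= L * c * `|d| ^+ 2.
  rewrite /C -ipE; apply: le_trans (ip_le_norm _ _) _.
  apply: le_trans (ler_wpM2r (normr_ge0 d) (g_lip _ _)) _.
  by rewrite addrK normrZ (ger0_norm (ltW c_gt0)) expr2 !mulrA.
rewrite /D; nra.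
Qed.

Lemma lipschitz_ip_le (g : V -> V) (L : R) d x y :
  (forall x y, `|g x - g y| <= L * `|x - y|) ->
  ip d (g x - g y) <= L / 2 * (`|d| ^+ 2 + `|x - y| ^+ 2).
Proof.
move=> g_lip; apply: le_trans (ip_le_norm _ _) _.
apply: le_trans (ler_wpM2l (normr_ge0 d) (g_lip x y)) _.
have L_norm_ge0 (u : V) : 0 <= L * `|u|.
  by rewrite -[u]subr0; exact: le_trans (normr_ge0 _) (g_lip u 0).
by apply: mul_le_half_sum_sqr; rewrite ?normr_ge0 ?L_norm_ge0.
Qed.

Lemma E_CN_step_le (Lc : {linear V -> V}) (f : V -> R) (g : V -> V) (L : R) x0 x1 x2 :
  op_symmetric ip Lc -> has_gradient ip f g ->
  (forall x y, `|g x - g y| <= L * `|x - y|) ->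
  E_CN ip Lc f L x2 x1 - E_CN ip Lc f L x1 x0
    <= ip (x2 - x1) (Lc (2^-1 *: (x2 + x1)) + (3 / 2) *: g x1 - 2^-1 *: g x0)
       + L * `|x2 - x1| ^+ 2.
Proof.
move=> Lc_sym f_grad g_lip.
have quad := symmetric_ip_midpoint x2 x1 Lc_sym.
have descent := lipschitz_gradient_descent x1 x2 f_grad g_lip.
have cross := lipschitz_ip_le (x2 - x1) x0 x1 g_lip.
rewrite (distrC x0) in cross; rewrite [ip (g x1) _]ipC in descent.
rewrite /E_CN !ipE in quad descent cross *; lra.
Qed.

Section SplitOperator.
Variables (M S : {linear V -> V}) (alphaM betaS : R).
Hypothesis S_skew : op_skew ip S.
Hypothesis negM_sym : op_symmetric ip (fun x => - M x).
Hypothesis alphaM_gt0 : 0 < alphaM.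
Let alphaM_ge0 : 0 <= alphaM := ltW alphaM_gt0.
Hypothesis betaS_ge0 : 0 <= betaS.
Hypothesis negM_coercive : forall x, alphaM * `|x| ^+ 2 <= ip (- M x) x.
Hypothesis S_bounded : forall x y, ip (S x) y <= betaS * `|x| * `|y|.

Let negM_ge0 x : 0 <= ip (- M x) x.
Proof. by apply: le_trans (negM_coercive x); rewrite mulr_ge0 ?sqr_ge0. Qed.

Let negM_formC x y : ip (- M x) y = ip (- M y) x.
Proof. by move: (negM_sym x y) => /= ->; exact: ipC. Qed.

Let negM_formL a x y z : ip (- M (a *: x + y)) z = a * ip (- M x) z + ip (- M y) z.
Proof. by rewrite linearD linearZ opprD -scalerN ipL. Qed.

Lemma negM_CauchySchwarz x y :
  ip (- M x) y ^+ 2 <= ip (- M x) x * ip (- M y) y.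
Proof. exact: (form_CauchySchwarz negM_formC negM_formL negM_ge0). Qed.

Lemma coercive_mul_norm_le x y :
  alphaM * `|x| * `|y| <= Num.sqrt (ip (- M x) x * ip (- M y) y).
Proof.
rewrite -[alphaM * _ * _]ger0_norm ?mulr_ge0 // -sqrtr_sqr; apply: ler_wsqrtr.
have -> : (alphaM * `|x| * `|y|) ^+ 2 = alphaM * `|x| ^+ 2 * (alphaM * `|y| ^+ 2) by ring.
by apply: ler_pM; rewrite ?mulr_ge0.
Qed.

Lemma scheme_ip_mu tau mu d : d = tau *: (M mu + S mu) ->
  ip d mu = - tau * ip (- M mu) mu.
Proof. by move=> ->; rewrite !ipE (skew_ip_diag mu S_skew); ring. Qed.

Lemma scheme_increment_norm tau mu d : 0 <= tau -> d = tau *: (M mu + S mu) ->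
  `|d| ^+ 2 <= tau * (1 + betaS / alphaM) * Num.sqrt (ip (- M mu) mu * ip (- M d) d).
Proof.
move=> tau_ge0 d_def; set r := Num.sqrt _.
have M_le : ip (M mu) d <= r.
  rewrite -[M mu]opprK ipE; apply: le_trans (ler_norm _) _.
  by rewrite normrN -sqrtr_sqr; apply: ler_wsqrtr; exact: negM_CauchySchwarz.
have S_le : ip (S mu) d <= betaS / alphaM * r.
  apply: le_trans (S_bounded mu d) _.
  have -> : betaS * `|mu| * `|d| = betaS / alphaM * (alphaM * `|mu| * `|d|).
    by field; rewrite gt_eqF.
  by rewrite ler_wpM2l ?divr_ge0 ?coercive_mul_norm_le.
rewrite ip_normE {1}d_def !ipE -mulrA ler_wpM2l // mulrDl mul1r.
exact: lerD.
Qed.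

Lemma scheme_dissipation tau A mu d : 0 < tau -> 0 <= A -> d = tau *: (M mu + S mu) ->
  ip d (mu + (tau * A) *: M d)
    <= - (2 * (1 + betaS / alphaM)^-1 * Num.sqrt A) * `|d| ^+ 2.
Proof.
move=> tau_gt0 A_ge0 d_def.
set X := ip (- M mu) mu; set Y := ip (- M d) d; set c := 1 + betaS / alphaM.
have c_gt0 : 0 < c by have := divr_ge0 betaS_ge0 alphaM_ge0; rewrite /c; lra.
have -> : ip d (mu + (tau * A) *: M d) = - tau * (X + A * Y).
  by rewrite !ipE (scheme_ip_mu d_def) [ip d (M d)]ipC /X /Y !ipE; ring.
have AGM : 2 * Num.sqrt A * Num.sqrt (X * Y) <= X + A * Y.
  have := sqrtr_AGM2 (negM_ge0 mu) (mulr_ge0 A_ge0 (negM_ge0 d)).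
  by rewrite mulrCA sqrtrM // mulrA.
have increment : c^-1 * `|d| ^+ 2 <= tau * Num.sqrt (X * Y).
  rewrite ler_pdivrMl // mulrA [c * _]mulrC.
  exact: scheme_increment_norm (ltW tau_gt0) d_def.
have sqrtA_ge0 := sqrtr_ge0 A; have := ltW tau_gt0; nra.
Qed.

End SplitOperator.

End InnerProduct.

Theorem theorem3p8 (R : realType) (V : completeNormedModType R)
  (ip : V -> V -> R) (Lc : {linear V -> V}) (f : V -> R) (gradf : V -> V)
  (L : R) (M S : V -> {linear V -> V}) (alphaM betaS tau A : R)
  (Phinm1 Phin Phihat Phinp1 : V) :
  is_hilbert_inner ip ->
  op_symmetric ip Lc -> op_posdef ip Lc ->
  has_gradient ip f gradf ->
  (forall x y, `|gradf x - gradf y| <= L * `|x - y|) ->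
  (forall Phi, op_skew ip (S Phi)) ->
  (forall Phi, op_symmetric ip (fun x => - M Phi x)) ->
  (forall Phi, op_posdef ip (fun x => - M Phi x)) ->
  0 < alphaM -> 0 < betaS ->
  (forall Phi Psi1 Psi2, ip (S Phi Psi1) Psi2 <= betaS * `|Psi1| * `|Psi2|) ->
  (forall Phi Psi, alphaM * `|Psi| ^+ 2 <= ip (- M Phi Psi) Psi) ->
  0 < tau -> 0 < A ->
  let Phihalf := 2^-1 *: (Phinp1 + Phin) in
  let mu := Lc Phihalf - (tau * A) *: M Phihat (Phinp1 - Phin)
            + (3 / 2) *: gradf Phin - 2^-1 *: gradf Phinm1 in
  tau^-1 *: (Phinp1 - Phin) = M Phihat mu + S Phihat mu ->
  L ^+ 2 / 4 * (1 + betaS / alphaM) ^+ 2 <= A ->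
  E_CN ip Lc f L Phinp1 Phin - E_CN ip Lc f L Phin Phinm1
    <= - (2 * (1 + betaS / alphaM)^-1 * Num.sqrt A - L) * `|Phinp1 - Phin| ^+ 2.
Proof.
move=> ip_hilbert Lc_sym _ f_grad gradf_lip S_skew negM_sym _ alphaM_gt0 betaS_gt0
  S_bounded negM_coercive tau_gt0 A_gt0 Phihalf mu scheme _.
set d := Phinp1 - Phin.
have d_def : d = tau *: (M Phihat mu + S Phihat mu).
  by rewrite -scheme scalerA mulfV ?gt_eqF // scale1r.
have mu_split : Lc Phihalf + (3 / 2) *: gradf Phin - 2^-1 *: gradf Phinm1
                = mu + (tau * A) *: M Phihat d.
  by rewrite /mu -/d [RHS]addrAC (addrAC (Lc Phihalf - _)) subrK.
have energy := E_CN_step_le ip_hilbert Phinm1 Phin Phinp1 Lc_sym f_grad gradf_lip.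
have dissipation := scheme_dissipation ip_hilbert (S_skew Phihat)
  (negM_sym Phihat) alphaM_gt0 (ltW betaS_gt0) (negM_coercive Phihat)
  (S_bounded Phihat) tau_gt0 (ltW A_gt0) d_def.
rewrite -/Phihalf -/d mu_split in energy.
lra.
Qed.
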